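(* Let $m\geq 0$ and $k\geq 1$ be integers. If $\lambda$ is a partition with exactly $m$ $k$-hooks (i.e. $\alpha_k(\lambda)=m$), then \[ |\lambda|\geq t(m,k)= m\left(\left\lfloor \frac{m}{k}\right\rfloor +1\right)k-\binom{\lfloor m/k\rfloor +1}{2}k^2. \]
   Context: For a partition $\lambda=(\lambda_1\geq\cdots\geq\lambda_r>0)$, $|\lambda|=\sum_i\lambda_i$ is its weight. For a cell $u$ of the Young diagram of $\lambda$, the hook length of $u$ is the number of cells $v$ of the diagram with $v=u$, or $v$ below $u$ in the same column, or $v$ to the right of $u$ in the same row. $\alpha_k(\lambda)$ is the number of cells of the Young diagram of $\lambda$ with hook length exactly $k$ (the number of $k$-hooks). The number $t(m,k)$ is the weight of the partition with $m$ parts, writing $m=lk+r$ with $0\le r\le k-1$, consisting of $r$ parts equal to $(l+1)k$ followed by $k$ parts equal to $jk$ for each $j=l,l-1,\dots,1$. *)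

From mathcomp Require Import all_boot.
Set Implicit Arguments. Unset Strict Implicit. Unset Printing Implicit Defensive.

Definition is_partition (la : seq nat) : bool :=
  sorted geq la && all (fun x => 0 < x) la.

Definition weight (la : seq nat) : nat := sumn la.

(* Cells of the Young diagram: (i, j) with i < size la and j < nth 0 la i. *)
(* Hook length of cell (i,j): the cell itself, the cells to its right in row i,
   and the cells below it in column j. *)
Definition hook (la : seq nat) (i j : nat) : nat :=
  1 + (nth 0 la i - j.+1)
    + \sum_(i.+1 <= i' < size la) (j < nth 0 la i').

Definition alpha (k : nat) (la : seq nat) : nat :=
  \sum_(0 <= i < size la) \sum_(0 <= j < nth 0 la i) (hook la i j == k).

(* The extremal partition with m parts: m = l k + r, 0 <= r < k;
   r parts (l+1)k followed by k parts jk for j = l, l-1, ..., 1. *)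
Definition t_partition (m k : nat) : seq nat :=
  nseq (m %% k) ((m %/ k).+1 * k)
  ++ flatten [seq nseq k (j * k) | j <- rev (iota 1 (m %/ k))].

Definition t (m k : nat) : nat := weight (t_partition m k).

(* Encode the partition [la] with [r] rows by its first-column hook lengths
   [beta la i = la_i + r - 1 - i]: [r] distinct naturals of sum [|la| + C(r, 2)].
   A cell of hook length [k] in row [i] yields a bead [beta la i] that can slide
   [k] places down the abacus (the position [beta la i - k] is empty).  Placing
   the beads on [k] runners according to their residue mod [k], a runner with
   [M] such moves carries at least [C(M + 1, 2)] more than the tightest packing
   of its beads, and the tightest packing of all runners still weighs at least
   [C(r, 2)]; hence [|la| >= k * sum_c C(M_c + 1, 2)] with [sum_c M_c >= m].
   The tangent bound [(l + 1) M <= C(M + 1, 2) + C(l + 1, 2)] with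
   [l = m %/ k] then gives [|la| >= t m k]. *)

From mathcomp Require Import all_boot zify.
Set Implicit Arguments. Unset Strict Implicit. Unset Printing Implicit Defensive.

Lemma bin2_mul2 n : 'C(n, 2) * 2 = n * n.-1.
Proof. by elim: n => [|[|n] IH] //; rewrite binS bin1 mulnDl IH /=; lia. Qed.

Lemma mul_le_bin2_add a l : l.+1 * a <= 'C(a.+1, 2) + 'C(l.+1, 2).
Proof.
have := bin2_mul2 a.+1; have := bin2_mul2 l.+1; rewrite /=.
(* [2 (l + 1) a <= a (a + 1) + l (l + 1)] amounts to [(a - l) (a - l - 1) >= 0]. *)
case: (leqP a l) => [/subnK <-|/subnK <-]; nia.
Qed.

Definition movable (k : nat) (B : seq nat) (b : nat) : bool :=
  (k <= b) && (b - k \notin B).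

(* [s] and the predecessors of its movable elements are disjoint subsets of [0, N). *)
Lemma size_add_count_movable_le (N : nat) s :
  uniq s -> (forall x, x \in s -> x < N) -> size s + count (movable 1 s) s <= N.
Proof.
move=> us sN; rewrite -size_filter -(size_map (subn^~ 1)) -size_cat.
rewrite -[N](size_iota 0); apply: uniq_leq_size => [|y].
  rewrite cat_uniq us /=; apply/andP; split.
    by apply/hasPn => y /mapP [b]; rewrite mem_filter => /andP [/andP [_ ?] _] ->.
  rewrite map_inj_in_uniq ?filter_uniq // => a b.
  by rewrite !mem_filter => /andP [/andP [? _] _] /andP [/andP [? _] _]; lia.
rewrite mem_cat mem_iota /= => /orP [/sN|/mapP [b]]; first by [].
rewrite mem_filter => /andP [_ /sN bN] ->.
by rewrite add0n (leq_ltn_trans (leq_subr 1 b)).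
Qed.

(* Induction on a strict upper bound [N] of [s]: removing the top bead [N] loses
   at most one move. *)
Lemma bin2_size_movable_le_sumn s : uniq s ->
  'C(size s, 2) + 'C((count (movable 1 s) s).+1, 2) <= sumn s.
Proof.
have [N sN] : exists N, forall x, x \in s -> x < N.
  by exists (\max_(x <- s) x).+1 => x xs; rewrite ltnS leq_bigmax_seq.
elim: N s sN => [|N IH] s sN us.
  by case: s sN us => // x s /(_ x (mem_head _ _)).
have [Ns|Nns] := boolP (N \in s); last first.
  apply: IH us => x xs; have := sN x xs; rewrite ltnS leq_eqVlt.
  by case: eqP xs Nns => [-> ->|].
set s' := rem N s; have ps := perm_to_rem Ns.
have us' : uniq s' := rem_uniq N us.
have sN' : forall x, x \in s' -> x < N.
  move=> x xs'; have := sN x (mem_rem xs'); rewrite ltnS leq_eqVlt.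
  by case: eqP xs' => [->|//]; rewrite mem_rem_uniqF.
have count_rem : count (movable 1 s) s <= (count (movable 1 s') s').+1.
  rewrite (permP ps) /= -/s' -[(count _ s').+1]add1n leq_add ?leq_b1 //.
  apply: sub_count => b /andP [b_gt0 bs]; rewrite /movable b_gt0.
  by apply: contra bs; apply: mem_rem.
have := size_add_count_movable_le us sN.
have := IH s' sN' us'; have := leq_bin2l 2 count_rem.
rewrite (perm_sumn ps) (perm_size ps) /= -/s' !binS !bin1; lia.
Qed.

Lemma bin2_size_le_sumn s : uniq s -> 'C(size s, 2) <= sumn s.
Proof. by move/bin2_size_movable_le_sumn; apply: leq_trans; rewrite leq_addr. Qed.

Section Runners.

Variable k : nat.
Hypothesis k_gt0 : 0 < k.

Definition runner (B : seq nat) (c : nat) : seq nat :=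
  [seq b %/ k | b <- B & b %% k == c].

Definition runner_moves (B : seq nat) (c : nat) : nat :=
  count (movable 1 (runner B c)) (runner B c).

Lemma big_residues (F : nat -> nat) B :
  \sum_(b <- B) F b = \sum_(c < k) \sum_(b <- B | b %% k == c) F b.
Proof.
rewrite (exchange_big_dep xpredT) //=; apply: eq_bigr => b _.
by rewrite (big_pred1 (Ordinal (ltn_pmod b k_gt0))) // => c; rewrite eq_sym.
Qed.

Lemma size_runners B : size B = \sum_(c < k) size (runner B c).
Proof.
rewrite -sum1_size big_residues; apply: eq_bigr => c _.
by rewrite size_map size_filter -sum1_count.
Qed.

Lemma sumn_runners B :
  sumn B = \sum_(c < k) (c * size (runner B c) + k * sumn (runner B c)).
Proof.
rewrite sumnE big_residues; apply: eq_bigr => c _.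
rewrite size_map size_filter -sum1_count sumnE big_map big_filter.
rewrite !big_distrr -big_split /=; apply: eq_bigr => b /eqP bc.
by rewrite {1}(divn_eq b k) bc addnC mulnC muln1.
Qed.

Lemma runner_uniq B c : uniq B -> uniq (runner B c).
Proof.
move=> uB; rewrite map_inj_in_uniq ?filter_uniq // => a b.
rewrite !mem_filter => /andP [/eqP ac _] /andP [/eqP bc _] ab.
by rewrite (divn_eq a k) (divn_eq b k) ac bc ab.
Qed.

Lemma count_movable_runners B :
  count (movable k B) B <= \sum_(c < k) runner_moves B c.
Proof.
rewrite /runner_moves -sumn_count sumnE big_map big_residues; apply: leq_sum => c _.
rewrite count_map -sumn_count sumnE big_map big_filter.
apply: leq_sum => b /eqP bc; case bm: (movable k B b) => //=.
case/andP: bm => kb bkB; have q_gt0 : 0 < b %/ k by rewrite divn_gt0.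
rewrite /movable q_gt0 lt0b; apply/negP => /mapP [b']; rewrite mem_filter.
case/andP => /eqP b'c b'B b'_eq.
suff b'E : b' = b - k by move: bkB; rewrite -b'E b'B.
rewrite (divn_eq b' k) (divn_eq b k) bc b'c -b'_eq mulnBl mul1n.
by have := leq_pmull k q_gt0; lia.
Qed.

(* [bin2_size_le_sumn] for the set [P] packing [g c] beads at the bottom of each
   runner [c]. *)
Lemma bin2_sum_le_runner_sizes (g : nat -> nat) :
  'C(\sum_(c < k) g c, 2) <= \sum_(c < k) (c * g c + k * 'C(g c, 2)).
Proof.
set P := [seq x <- iota 0 (k * (\sum_(c < k) g c).+1) | x %/ k < g (x %% k)].
have uP : uniq P by rewrite filter_uniq // iota_uniq.
have runnerP (c : 'I_k) : perm_eq (runner P c) (iota 0 (g c)).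
  apply: uniq_perm; rewrite ?iota_uniq ?runner_uniq // => q.
  rewrite mem_iota /=; apply/idP/idP => [/mapP [x]|q_lt].
    by rewrite !mem_filter => /andP [/eqP <- /andP [? _]] ->.
  have gc_le : g c <= \sum_(c' < k) g c' by rewrite (bigD1 c) //= leq_addr.
  apply/mapP; exists (q * k + c); last by rewrite divnMDl // divn_small ?addn0.
  rewrite !mem_filter divnMDl // modnMDl !modn_small // divn_small // addn0.
  rewrite eqxx q_lt /= mem_iota /=; move: gc_le q_lt (ltn_ord c).
  by move: (\sum_(_ < _) _) (g c) (nat_of_ord c) => S gc c'; nia.
have size_runnerP (c : 'I_k) : size (runner P c) = g c.
  by rewrite (perm_size (runnerP c)) size_iota.
have sumn_runnerP (c : 'I_k) : sumn (runner P c) = 'C(g c, 2).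
  by rewrite (perm_sumn (runnerP c)) sumnE -bin2_sum /index_iota subn0.
rewrite -(eq_bigr _ (fun c _ => size_runnerP c)) -size_runners.
rewrite -(eq_bigr (F1 := fun c : 'I_k =>
  c * size (runner P c) + k * sumn (runner P c))).
  by rewrite -sumn_runners bin2_size_le_sumn.
by move=> c _; rewrite size_runnerP sumn_runnerP.
Qed.

Lemma bin2_size_add_runner_moves_le_sumn B : uniq B ->
  'C(size B, 2) + k * \sum_(c < k) 'C((runner_moves B c).+1, 2) <= sumn B.
Proof.
move=> uB; rewrite size_runners sumn_runners.
apply: (leq_trans (leq_add
  (bin2_sum_le_runner_sizes (fun c => size (runner B c))) (leqnn _))).
rewrite big_distrr -big_split /=; apply: leq_sum => c _.
rewrite -addnA leq_add2l -mulnDr leq_mul2l.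
by rewrite bin2_size_movable_le_sumn ?runner_uniq ?orbT.
Qed.

End Runners.

Definition beta (la : seq nat) (i : nat) : nat := nth 0 la i + (size la - i.+1).

Definition beta_set (la : seq nat) : seq nat :=
  [seq beta la i | i <- iota 0 (size la)].

Definition column_length (la : seq nat) (j : nat) : nat :=
  count (fun x => j < x) la.

Lemma sumn_beta_set la : sumn (beta_set la) = sumn la + 'C(size la, 2).
Proof.
rewrite sumnE big_map big_split /= -bin2_sum big_nat_rev /index_iota subn0.
congr (_ + _).
elim: la => [|x la IH] /=; first by rewrite big_nil.
by rewrite big_cons -[1]/(1 + 0) iotaDl big_map -IH.
Qed.

Lemma leq_column_length la j j' :
  j <= j' -> column_length la j' <= column_length la j.
Proof. by move=> jj'; apply: sub_count => x /=; apply: leq_ltn_trans. Qed.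

Lemma nth_gt_column_length la i j : sorted geq la -> i < size la ->
  (j < nth 0 la i) = (i < column_length la j).
Proof.
elim: la i => [//|x la IH] i /= x_path i_lt.
have la_le_x := order_path_min (rev_trans leq_trans) x_path.
rewrite /column_length /= -/(column_length la j).
have [jx|xj] := ltnP j x.
  case: i i_lt => [|i] i_lt /=; first by rewrite jx.
  by rewrite add1n ltnS IH ?(path_sorted x_path).
have -> : column_length la j = 0.
  apply/eqP; rewrite -leqn0 leqNgt -has_count.
  by apply/hasPn => y /(allP la_le_x) yx; rewrite -leqNgt (leq_trans yx xj).
case: i i_lt => [|i] /= i_lt; first by rewrite ltnNge xj.
by rewrite ltnNge (leq_trans _ xj) //; apply: (allP la_le_x); exact: mem_nth.
Qed.

Lemma sum_ltn_nat a b c : a <= c <= b -> \sum_(a <= i < b) (i < c) = c - a.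
Proof.
case/andP => ac cb; rewrite (big_cat_nat _ (n := c)) //= [X in _ + X]big_nat_cond.
rewrite [X in _ + X]big1 => [|i /andP [/andP [ci _] _]]; last by rewrite ltnNge ci.
rewrite addn0 -[c - a]muln1 -sum_nat_const_nat.
by apply: eq_big_nat => i /andP [_ ->].
Qed.

Lemma hook_arm_leg la i j : sorted geq la -> i < size la -> j < nth 0 la i ->
  hook la i j = 1 + (nth 0 la i - j.+1) + (column_length la j - i.+1).
Proof.
move=> la_sorted il jl; rewrite /hook; congr (_ + _).
rewrite -(@sum_ltn_nat _ (size la)).
  by apply: eq_big_nat => i' /andP [_ i'l]; rewrite nth_gt_column_length.
by rewrite -nth_gt_column_length // jl count_size.
Qed.

Section SortedPartition.

Variable la : seq nat.
Hypothesis la_sorted : sorted geq la.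

Lemma nth_le_sorted i i' : i <= i' -> i' < size la -> nth 0 la i' <= nth 0 la i.
Proof.
move=> ii' i'_lt; apply: (sorted_leq_nth (rev_trans leq_trans) leqnn 0 la_sorted).
- by rewrite inE (leq_ltn_trans ii').
- by rewrite inE.
- exact: ii'.
Qed.

Lemma beta_set_uniq : uniq (beta_set la).
Proof.
have beta_lt i i' : i < i' -> i' < size la -> beta la i' < beta la i.
  by move=> ii' i'_lt; have := nth_le_sorted (ltnW ii') i'_lt; rewrite /beta; lia.
rewrite map_inj_in_uniq ?iota_uniq // => i i'; rewrite !mem_iota /= => il i'l.
case: (ltngtP i i') => // [ii'|i'i] eq_beta.
  by have := beta_lt _ _ ii' i'l; rewrite eq_beta ltnn.
by have := beta_lt _ _ i'i il; rewrite eq_beta ltnn.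
Qed.

Lemma hook_movable i j : i < size la -> j < nth 0 la i ->
  movable (hook la i j) (beta_set la) (beta la i).
Proof.
move=> il jl; rewrite hook_arm_leg //.
have icol : i < column_length la j by rewrite -nth_gt_column_length.
have col_le : column_length la j <= size la := count_size _ _.
rewrite /movable /beta; apply/andP; split; first lia.
apply/negP => /mapP [i']; rewrite mem_iota /beta /= => i'l.
have := nth_gt_column_length j la_sorted i'l.
by case: (ltnP i' (column_length la j)) => [?|? /negbT]; rewrite -?leqNgt; lia.
Qed.

Lemma hook_row_decreasing i j j' : i < size la -> j < j' -> j' < nth 0 la i ->
  hook la i j' < hook la i j.
Proof.
move=> il jj' j'l; have jl := ltn_trans jj' j'l.
have := leq_column_length la (ltnW jj').
have := nth_gt_column_length j la_sorted il.
have := nth_gt_column_length j' la_sorted il.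
by rewrite jl j'l !hook_arm_leg //; lia.
Qed.

Lemma row_hooks_le_movable k i : i < size la ->
  \sum_(0 <= j < nth 0 la i) (hook la i j == k)
    <= movable k (beta_set la) (beta la i).
Proof.
move=> il; set L := nth 0 la i.
have hook_inj : {in iota 0 L &, injective (hook la i)}.
  move=> j j'; rewrite !mem_iota /= => jl j'l.
  case: (ltngtP j j') => // [jj'|j'j] eq_hook.
    by have := hook_row_decreasing il jj' j'l; rewrite eq_hook ltnn.
  by have := hook_row_decreasing il j'j jl; rewrite eq_hook ltnn.
have -> : \sum_(0 <= j < L) (hook la i j == k)
          = count_mem k (map (hook la i) (iota 0 L)).
  by rewrite count_map -sumn_count sumnE big_map /index_iota subn0.
rewrite count_uniq_mem ?map_inj_in_uniq ?iota_uniq //.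
by case: mapP => // -[j]; rewrite mem_iota /= => jl ->; rewrite hook_movable.
Qed.

Lemma alpha_le_count_movable k :
  alpha k la <= count (movable k (beta_set la)) (beta_set la).
Proof.
apply: (@leq_trans (\sum_(0 <= i < size la) movable k (beta_set la) (beta la i))).
  rewrite /alpha big_nat_cond [X in _ <= X]big_nat_cond.
  by apply: leq_sum => i /andP [/andP [_ il] _]; apply: row_hooks_le_movable.
by rewrite -sumn_count sumnE {2}/beta_set !big_map /index_iota subn0.
Qed.

End SortedPartition.

Lemma t_closed_form m k :
  t m k = m * (m %/ k).+1 * k - 'C((m %/ k).+1, 2) * k ^ 2.
Proof.
rewrite /t /weight /t_partition sumn_cat sumn_nseq.
rewrite sumn_flatten -map_comp map_rev sumn_rev.
rewrite sumnE big_map (eq_bigr (fun j => j * k ^ 2)) => [|j _]; last first.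
  by rewrite /= sumn_nseq mulnA.
rewrite -big_distrl /= -sumnE.
have -> : sumn (iota 1 (m %/ k)) = 'C((m %/ k).+1, 2).
  by rewrite -bin2_sum /index_iota subn0 -sumnE.
have := bin2_mul2 (m %/ k).+1; have := divn_eq m k; rewrite /=.
set l := m %/ k; set r := m %% k; set X := 'C(l.+1, 2); clearbody l r X => -> X2.
nia.
Qed.

Lemma mul_sum_le_sum_bin2 (I : finType) (f : I -> nat) l :
  l.+1 * \sum_i f i <= \sum_i 'C((f i).+1, 2) + #|I| * 'C(l.+1, 2).
Proof.
rewrite big_distrr -sum_nat_const -big_split /=.
by apply: leq_sum => i _; apply: mul_le_bin2_add.
Qed.

Theorem theorem3p1 (m k : nat) (la : seq nat) :
  0 < k -> is_partition la -> alpha k la = m ->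
  t m k <= weight la /\
  t m k = m * (m %/ k).+1 * k - 'C((m %/ k).+1, 2) * k ^ 2.
Proof.
move=> k_gt0 /andP [la_sorted _] <-; split; last exact: t_closed_form.
set B := beta_set la; set l := alpha k la %/ k.
have moves_le : alpha k la <= \sum_(c < k) runner_moves k B c.
  exact: leq_trans (alpha_le_count_movable la_sorted k) (count_movable_runners k_gt0 B).
have weight_ge : k * \sum_(c < k) 'C((runner_moves k B c).+1, 2) <= weight la.
  have := bin2_size_add_runner_moves_le_sumn k_gt0 (beta_set_uniq la_sorted).
  by rewrite sumn_beta_set size_map size_iota addnC leq_add2r.
rewrite t_closed_form -/l leq_subLR.
have := mul_sum_le_sum_bin2 (fun c : 'I_k => runner_moves k B c) l.
rewrite card_ord => /(leq_trans (leq_mul (leqnn l.+1) moves_le)).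
move/(leq_mul (leqnn k)).
by rewrite mulnDr => /leq_trans/(_ (leq_add weight_ge (leqnn _))); lia.
Qed.
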